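(* Let $S$ be a set of $n$ points in $\mathbb{R}^D$, let $t\geqslant 1$ be a real number, let $G$ be a $t$-spanner for $S$, and let $T$ be a minimum spanning tree of $G$. Let $m$ be an integer with $1\leqslant m\leqslant n-1$, and let $T'$ and $T''$ be two vertex-disjoint subtrees (connected subgraphs) of $T$, each consisting of at most $m$ vertices. Let $p$ be a vertex of $T'$, let $q$ be a vertex of $T''$, and let $\gamma$ be the path in $T$ between $p$ and $q$. If $x$ is a vertex of $T'$ lying on the subpath of $\gamma$ within $T'$, and $y$ is a vertex of $T''$ lying on the subpath of $\gamma$ within $T''$, then $$d(x,y)\leqslant \big(2t(m-1)+1\big)\cdot d(p,q).$$
   Context: $d(u,v)$ denotes Euclidean distance. For a graph $G$ with vertex set $S\subset\mathbb{R}^D$, each edge $(u,v)$ has weight (length) $d(u,v)$ and $d_G(u,v)$ is the length of a shortest path in $G$ between $u$ and $v$. $G$ is a $t$-spanner for $S$ if its vertex set is $S$ and $d_G(u,v)\leqslant t\cdot d(u,v)$ for all $u,v\in S$. A minimum spanning tree of $G$ is a spanning tree of $G$ (using only edges of $G$) of minimum total edge weight. *)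

From HB Require Import structures.
From mathcomp Require Import all_boot all_order all_algebra.
Set Implicit Arguments. Unset Strict Implicit. Unset Printing Implicit Defensive.
Import Order.TTheory GRing.Theory Num.Theory.
Local Open Scope ring_scope.

Section Defs.
Variables (R : rcfType) (D : nat) (V : finType) (pt : V -> 'rV[R]_D).

Definition edist (u v : 'rV[R]_D) : R :=
  Num.sqrt (\sum_(i < D) (u ord0 i - v ord0 i) ^+ 2).

Definition vdist (u v : V) : R := edist (pt u) (pt v).

Definition walk_len (u : V) (s : seq V) : R :=
  \sum_(e <- zip (u :: s) s) vdist e.1 e.2.

Definition is_walk (E : rel V) (u v : V) (s : seq V) : bool :=
  path E u s && (last u s == v).

Definition simple_graph (E : rel V) : Prop :=
  (forall u v, E u v = E v u) /\ (forall u, ~~ E u u).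

(* G is a t-spanner: d_G(u,v) <= t d(u,v), i.e. some path realizes this bound *)
Definition t_spanner (t : R) (G : rel V) : Prop :=
  forall u v, exists s, is_walk G u v s /\ walk_len u s <= t * vdist u v.

Definition connected_graph (E : rel V) : Prop := forall u v, connect E u v.

Definition acyclic (E : rel V) : Prop :=
  forall c : seq V, uniq c -> (3 <= size c)%N -> ~~ cycle E c.

(* total weight of the (undirected) edge set of E *)
Definition weight (E : rel V) : R :=
  \sum_(e : V * V | E e.1 e.2 && (enum_rank e.1 < enum_rank e.2)%N) vdist e.1 e.2.

Definition spanning_tree (G T : rel V) : Prop :=
  simple_graph T /\ (forall u v, T u v -> G u v) /\ connected_graph T /\ acyclic T.

Definition is_MST (G T : rel V) : Prop :=
  spanning_tree G T /\ forall T2, spanning_tree G T2 -> weight T <= weight T2.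

(* vertex set of a connected subgraph (subtree) of T *)
Definition subtree (T : rel V) (A : {set V}) : Prop :=
  forall x y, x \in A -> y \in A ->
    connect (fun a b => [&& T a b, a \in A & b \in A]) x y.

End Defs.

From HB Require Import structures.
From mathcomp Require Import all_boot all_order all_algebra.
From mathcomp Require Import ring lra.
Set Implicit Arguments. Unset Strict Implicit. Unset Printing Implicit Defensive.
Import Order.TTheory GRing.Theory Num.Theory.
Local Open Scope ring_scope.

(* Each edge ab of the tree path from p to q has length at most t d(p,q): deleting ab
   from T separates p from q, so a t-spanner path from p to q in G contains an edge cd
   joining the two components; T - ab + cd is again a spanning tree of G, hence
   d(a,b) <= d(c,d) <= t d(p,q) by minimality of T.  Tree paths are unique, so the part
   of the path between p and x stays inside T' and has at most m - 1 edges, which gives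
   d(p,x) <= (m - 1) t d(p,q); likewise d(y,q) <= (m - 1) t d(p,q), and the triangle
   inequality through p and q concludes. *)

Section ZipCons.
Variable T : eqType.
Implicit Types (x a b : T) (s : seq T).

Lemma zip_cons_cat x s1 s2 :
  zip (x :: s1 ++ s2) (s1 ++ s2) = zip (x :: s1) s1 ++ zip (last x s1 :: s2) s2.
Proof. by elim: s1 x => //= y s1 IHs1 x; rewrite IHs1. Qed.

Lemma mem_zip_cons_split x s a b : (a, b) \in zip (x :: s) s ->
  exists s1 s2, s = s1 ++ b :: s2 /\ a = last x s1.
Proof.
elim: s x => [|y s IHs] x //=; rewrite in_cons => /orP[/eqP[-> ->]|/IHs[s1 [s2 [-> ->]]]].
  by exists [::], s.
by exists (y :: s1), s2.
Qed.

End ZipCons.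

Section EdgeSurgery.
Variable V : finType.
Implicit Types (E : rel V) (a b c d u w x y : V) (s : seq V).

Definition uedge u w : rel V := fun x y => (x == u) && (y == w) || (x == w) && (y == u).
Definition del_edge E u w : rel V := fun x y => E x y && ~~ uedge u w x y.
Definition add_edge E u w : rel V := fun x y => E x y || uedge u w x y.

Lemma uedgeP u w x y : reflect ((x, y) = (u, w) \/ (x, y) = (w, u)) (uedge u w x y).
Proof.
apply: (iffP orP) => [[] /andP[/eqP-> /eqP->]|[] [-> ->]]; rewrite ?eqxx; by [left|right].
Qed.

Lemma uedgeC u w : symmetric (uedge u w).
Proof. by move=> x y; rewrite /uedge orbC andbC [(y == w) && _]andbC. Qed.

Lemma del_edge_sym E u w : symmetric E -> symmetric (del_edge E u w).
Proof. by move=> Esym x y; rewrite /del_edge Esym uedgeC. Qed.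

Lemma add_edge_sym E u w : symmetric E -> symmetric (add_edge E u w).
Proof. by move=> Esym x y; rewrite /add_edge Esym uedgeC. Qed.

Lemma connect_del_edge E a b u : connect E a u ->
  connect (del_edge E a b) a u || connect (del_edge E a b) b u.
Proof.
case/connectP=> s; elim/last_ind: s u => [|s v IHs] u /=; first by move=> _ ->; rewrite connect0.
rewrite rcons_path last_rcons => /andP[/IHs/(_ erefl) IHu Ev] ->.
have [/uedgeP[[_ ->]|[_ ->]]|not_ab] := boolP (uedge a b (last a s) v); rewrite ?connect0 ?orbT //.
have Edv : del_edge E a b (last a s) v by rewrite /del_edge Ev not_ab.
by case/orP: IHu => /connect_trans/(_ (connect1 Edv)) ->; rewrite ?orbT.
Qed.

Lemma path_del_edge E u w x s : (u \notin x :: s) || (w \notin x :: s) ->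
  path E x s -> path (del_edge E u w) x s.
Proof.
move=> uw_out; apply: (sub_in_path (P := mem (x :: s))); last exact/allP.
move=> y z yin zin Eyz; rewrite /del_edge Eyz /=.
by apply/uedgeP => -[] [ey ez]; move: uw_out; rewrite -ey -ez yin zin.
Qed.

Lemma path_add_edge_inner E c d x s y : c \notin s -> d \notin s -> s != [::] ->
  path (add_edge E c d) x (rcons s y) -> path E x (rcons s y).
Proof.
have keep z z' : (z \notin [:: c; d]) || (z' \notin [:: c; d]) -> add_edge E c d z z' -> E z z'.
  move=> out /orP[//|/uedgeP[] [ez ez']]; move: out; rewrite ez ez' !inE !eqxx ?orbT //.
elim: s x => [|v s IHs] x //; rewrite !inE !negb_or => /andP[cv cs] /andP[dv ds] _ /=.
have vout : v \notin [:: c; d] by rewrite !inE negb_or ![v == _]eq_sym cv dv.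
case/andP=> /keep-> /=; rewrite ?vout ?orbT //.
case: s IHs cs ds => [|v' s] IHs cs ds /=; last exact: IHs.
by case/andP=> /keep->; rewrite ?vout.
Qed.

Lemma acyclic_edge_bridge E u w : simple_graph E -> acyclic E -> E u w ->
  ~~ connect (del_edge E u w) u w.
Proof.
move=> [Esym Eirr] Eacyc Euw; apply/negP => /connectP[s0 Ps0 Ls0].
case: (shortenP Ps0) Ls0 => s Ps Us _ Ls.
have PEs : path E u s by apply: sub_path Ps => x y /andP[].
case: s Ps Us Ls PEs => [|v [|v' s]] Ps Us Ls PEs.
- by move: Euw; rewrite /= in Ls; rewrite Ls (negbTE (Eirr u)).
- by move: Ps; rewrite /= in Ls; rewrite /= -Ls /del_edge /uedge !eqxx /= andbF.
case/negP: (Eacyc _ Us isT).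
by rewrite /cycle rcons_path PEs -Ls Esym.
Qed.

Lemma path_edge_separates E p s1 w s2 : simple_graph E -> acyclic E ->
  path E p (s1 ++ w :: s2) -> uniq (p :: s1 ++ w :: s2) ->
  ~~ connect (del_edge E (last p s1) w) p (last w s2).
Proof.
move=> [Esym Eirr] Eacyc; set u := last p s1; set Ed := del_edge E u w.
rewrite cat_path => /and3P[Ps1 Euw Ps2]; rewrite -cat_cons cat_uniq => /and3P[_ s1_s2 _].
have w_s1 : w \notin p :: s1.
  by apply: contra s1_s2 => w_s1; apply/hasP; exists w; rewrite ?mem_head.
have u_s2 : u \notin w :: s2.
  by apply: contra s1_s2 => u_s2; apply/hasP; exists u; rewrite ?mem_last.
have Edsym : connect_sym Ed by apply/sym_connect_sym/del_edge_sym.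
have pu : connect Ed p u.
  by apply: (path_connect (path_del_edge _ Ps1)); rewrite ?w_s1 ?orbT ?mem_last.
have w_end : connect Ed w (last w s2).
  by apply: (path_connect (path_del_edge _ Ps2)); rewrite ?u_s2 ?mem_last.
apply: contraL (acyclic_edge_bridge (conj Esym Eirr) Eacyc Euw) => p_end; apply/negPn.
by rewrite (connect_trans _ (connect_trans p_end _)) // Edsym.
Qed.

Lemma tree_path_sub_subtree E (A : {set V}) p s : simple_graph E -> acyclic E ->
  subtree E A -> path E p s -> uniq (p :: s) -> p \in A -> last p s \in A ->
  {subset p :: s <= A}.
Proof.
move=> Esimple Eacyc Asub Ps Us pA endA v; rewrite in_cons => /predU1P[-> //|v_s].
apply/negPn/negP => vA; move: Ps Us endA; case/splitPr: v_s => s1 s2 Ps Us.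
rewrite last_cat /= => endA.
case/negP: (path_edge_separates Esimple Eacyc Ps Us).
apply: connect_sub (Asub _ _ pA endA) => x y /and3P[Exy xA yA]; apply: connect1.
rewrite /del_edge Exy; apply/uedgeP => -[] [ex ey].
  by move: vA; rewrite -ey yA.
by move: vA; rewrite -ex xA.
Qed.

Lemma acyclic_subrel E E' : subrel E E' -> acyclic E' -> acyclic E.
Proof. by move=> EE' E'acyc c Uc c3; apply: contra (E'acyc c Uc c3); apply: sub_cycle. Qed.

Lemma acyclic_add_edge E c d : symmetric E -> acyclic E -> ~~ connect E c d ->
  acyclic (add_edge E c d).
Proof.
move=> Esym Eacyc ncd C UC C3; apply/negP => cycC.
have [/andP[cC dC]|not_cdC] := boolP ((c \in C) && (d \in C)); last first.
  case/negP: (Eacyc C UC C3); apply: (sub_in_cycle (P := mem C)) cycC; last exact/allP.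
  by move=> x y xC yC /orP[//|/uedgeP[] [ex ey]]; move: not_cdC; rewrite -ex -ey xC yC.
have cd : c != d by apply: contraNneq ncd => ->.
case: (rot_to cC) => i s rotC.
move: cycC UC C3; rewrite -(rot_cycle i) -(rot_uniq i) -(size_rot i) rotC.
have : d \in s by move: dC; rewrite -(mem_rot i) rotC inE eq_sym (negbTE cd).
case/splitPr=> s1 s2; rewrite /cycle rcons_cat /= -cat_rcons cat_path last_rcons.
case/andP=> Ps1 Ps2; rewrite mem_cat !inE negb_or => /andP[/andP[c_s1 /norP[_ c_s2]]].
rewrite cat_uniq /= => /and4P[_ /norP[d_s1 _] d_s2 _] C3.
(* One of the two arcs of the cycle between c and d has an inner vertex, so it avoids cd. *)
have [s1_nil|s1_nil] := eqVneq s1 [::].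
  have s2_nil : s2 != [::] by move: C3; rewrite s1_nil; case: s2 {Ps2 c_s2 d_s2}.
  case/negP: ncd; rewrite (sym_connect_sym Esym); apply/connectP.
  by exists (rcons s2 c); rewrite ?last_rcons // (path_add_edge_inner c_s2 d_s2).
case/negP: ncd; apply/connectP; exists (rcons s1 d); rewrite ?last_rcons //.
exact: path_add_edge_inner c_s1 d_s1 s1_nil Ps1.
Qed.

Lemma connected_add_edge E a b c d : symmetric E ->
  (forall u, connect E a u || connect E b u) -> ~~ connect E c d ->
  connected_graph (add_edge E c d).
Proof.
move=> Esym sides ncd.
set E' := add_edge E c d; have E'sym := sym_connect_sym (add_edge_sym c d Esym).
have EE' : subrel (connect E) (connect E').
  by apply: connect_sub => x y Exy; apply/connect1/orP; left.
have E'cd : connect E' c d by apply/connect1/orP; right; rewrite /uedge !eqxx.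
have E'ab : connect E' a b.
  have Esym' := sym_connect_sym Esym.
  have [ac|bc] := orP (sides c); have [ad|bd] := orP (sides d).
  - by case/negP: ncd; rewrite Esym' in ac; exact: connect_trans ac ad.
  - by rewrite (connect_trans (EE' _ _ ac)) // (connect_trans E'cd) // E'sym EE'.
  - by rewrite (connect_trans (EE' _ _ ad)) // E'sym (connect_trans (EE' _ _ bc)).
  - by case/negP: ncd; rewrite Esym' in bc; exact: connect_trans bc bd.
have from_a u : connect E' a u.
  by case/orP: (sides u) => /EE'; last apply: connect_trans E'ab.
by move=> u v; rewrite (connect_trans _ (from_a v)) // E'sym.
Qed.

Lemma path_crossing E (P : pred V) x s : path E x s -> P x -> ~~ P (last x s) ->
  exists c d, [/\ (c, d) \in zip (x :: s) s, E c d, P c & ~~ P d].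
Proof.
elim: s x => [|y s IHs] x /=; first by move=> _ ->.
case/andP=> Exy Ps Px; have [Py|nPy] := boolP (P y).
  by case/(IHs y Ps Py)=> c [d [cd_s Ecd Pc nPd]]; exists c, d; rewrite in_cons cd_s orbT.
by exists x, y; rewrite in_cons eqxx.
Qed.

End EdgeSurgery.

Section Euclid.
Variables (R : rcfType) (D : nat).
Implicit Types (a b : 'I_D -> R) (u v w : 'rV[R]_D).

Lemma lagrange_identity a b :
  \sum_i \sum_j (a i * b j - a j * b i) ^+ 2 =
  2 * ((\sum_i a i ^+ 2) * (\sum_i b i ^+ 2) - (\sum_i a i * b i) ^+ 2).
Proof.
have swap : \sum_i \sum_j a j ^+ 2 * b i ^+ 2 = \sum_i \sum_j a i ^+ 2 * b j ^+ 2.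
  exact: exchange_big.
transitivity (\sum_i \sum_j
    (a i ^+ 2 * b j ^+ 2 + a j ^+ 2 * b i ^+ 2 - (a i * b i * (a j * b j)) *+ 2)).
  by apply: eq_bigr => i _; apply: eq_bigr => j _; ring.
under eq_bigr => i _ do rewrite sumrB big_split /= sumrMnl.
by rewrite sumrB big_split /= sumrMnl swap expr2 !big_distrlr; ring.
Qed.

Lemma sumr_sqr_ge0 a : 0 <= \sum_i a i ^+ 2.
Proof. by apply: sumr_ge0 => i _; apply: sqr_ge0. Qed.

Lemma cauchy_schwarz a b :
  \sum_i a i * b i <= Num.sqrt (\sum_i a i ^+ 2) * Num.sqrt (\sum_i b i ^+ 2).
Proof.
have : 0 <= \sum_i \sum_j (a i * b j - a j * b i) ^+ 2.
  by apply: sumr_ge0 => i _; apply: sumr_sqr_ge0.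
rewrite lagrange_identity -sqrtrM ?sumr_sqr_ge0 // => lagr.
rewrite (le_trans (ler_norm _)) // -sqrtr_sqr ler_wsqrtr //; lra.
Qed.

Lemma edist_ge0 u v : 0 <= edist u v.
Proof. exact: sqrtr_ge0. Qed.

Lemma edistC u v : edist u v = edist v u.
Proof. by rewrite /edist; congr Num.sqrt; apply: eq_bigr => i _; rewrite -opprB sqrrN. Qed.

Lemma edistxx u : edist u u = 0.
Proof. by rewrite /edist big1 ?sqrtr0 // => i _; rewrite subrr expr0n. Qed.

Lemma edist_triangle u v w : edist u w <= edist u v + edist v w.
Proof.
pose a i := u ord0 i - v ord0 i; pose b i := v ord0 i - w ord0 i.
rewrite /edist -[X in _ <= X + _]/(Num.sqrt (\sum_i a i ^+ 2)).
rewrite -[X in _ <= _ + X]/(Num.sqrt (\sum_i b i ^+ 2)).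
have -> : \sum_i (u ord0 i - w ord0 i) ^+ 2 =
    \sum_i a i ^+ 2 + 2 * \sum_i a i * b i + \sum_i b i ^+ 2.
  by rewrite mulr_sumr -!big_split /=; apply: eq_bigr => i _; rewrite /a /b; ring.
have := cauchy_schwarz a b; have := sqr_sqrtr (sumr_sqr_ge0 a).
have := sqr_sqrtr (sumr_sqr_ge0 b).
have := sqrtr_ge0 (\sum_i a i ^+ 2); have := sqrtr_ge0 (\sum_i b i ^+ 2).
set A := \sum_i a i ^+ 2; set B := \sum_i b i ^+ 2.
set sA := Num.sqrt A; set sB := Num.sqrt B => sB0 sA0 sB2 sA2 cs.
rewrite -[X in _ <= X]ger0_norm ?addr_ge0 // -sqrtr_sqr ler_wsqrtr //.
rewrite -sA2 -sB2; nra.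
Qed.

End Euclid.

Section SpanningTrees.
Variables (R : rcfType) (D : nat) (V : finType) (pt : V -> 'rV[R]_D).
Implicit Types (E G T : rel V) (a b c d p q u v : V) (s : seq V).

Lemma vdistC u v : vdist pt u v = vdist pt v u.
Proof. exact: edistC. Qed.

Lemma walk_len_cons u v s : walk_len pt u (v :: s) = vdist pt u v + walk_len pt v s.
Proof. by rewrite /walk_len /= big_cons. Qed.

Lemma vdist_le_walk_len u s : vdist pt u (last u s) <= walk_len pt u s.
Proof.
elim: s u => [|v s IHs] u /=; first by rewrite /walk_len big_nil /vdist edistxx.
by rewrite walk_len_cons (le_trans (edist_triangle _ (pt v) _)) // lerD2l IHs.
Qed.

Lemma step_le_walk_len u s c d : (c, d) \in zip (u :: s) s -> vdist pt c d <= walk_len pt u s.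
Proof.
move=> cd_s; rewrite /walk_len (big_rem _ cd_s) lerDl.
by apply: sumr_ge0 => e _; apply: edist_ge0.
Qed.

Lemma walk_len_le u s K : (forall e, e \in zip (u :: s) s -> vdist pt e.1 e.2 <= K) ->
  walk_len pt u s <= (size s)%:R * K.
Proof.
elim: s u => [|v s IHs] u steps /=; first by rewrite /walk_len big_nil mul0r.
rewrite walk_len_cons -addn1 natrD mulrDl mul1r addrC lerD //.
  by apply: IHs => e e_s; apply: steps; rewrite inE e_s orbT.
by apply: (steps (u, v)); rewrite inE eqxx.
Qed.

Lemma eq_weight E E' : E =2 E' -> weight pt E = weight pt E'.
Proof. by move=> EE'; apply: eq_bigl => e; rewrite EE'. Qed.

Lemma weight_uedge a b : a != b -> weight pt (uedge a b) = vdist pt a b.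
Proof.
wlog lt_ab : a b / (enum_rank a < enum_rank b)%N => [wlog_ab ab|_].
  have [lt_ab|lt_ba|/val_inj/enum_rank_inj eq_ab] := ltngtP (enum_rank a) (enum_rank b).
  - exact: wlog_ab.
  - rewrite vdistC -wlog_ab 1?eq_sym //; by apply: eq_weight => x y; rewrite /uedge orbC.
  - by rewrite eq_ab eqxx in ab.
rewrite /weight (big_pred1 (a, b)) // => -[x y] /=.
apply/andP/eqP => [[/uedgeP[] [-> ->] // lt_ba]|[-> ->]]; last by rewrite /uedge !eqxx.
by move: (ltn_trans lt_ab lt_ba); rewrite ltnn.
Qed.

Lemma weight_add_edge E c d : c != d -> ~~ E c d -> ~~ E d c ->
  weight pt (add_edge E c d) = weight pt E + vdist pt c d.
Proof.
move=> cd ncd ndc; rewrite -weight_uedge // /weight.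
rewrite big_mkcond [X in _ = X + _]big_mkcond [X in _ = _ + X]big_mkcond -big_split.
apply: eq_bigr => -[x y] _ /=; rewrite /add_edge.
have [/uedgeP[] [-> ->]|_] := boolP (uedge c d x y); last by rewrite orbF addr0.
  by rewrite (negbTE ncd) add0r.
by rewrite (negbTE ndc) add0r.
Qed.

Lemma spanning_tree_exchange G T a b c d : simple_graph G -> spanning_tree G T ->
  T a b -> G c d -> ~~ connect (del_edge T a b) c d ->
  spanning_tree G (add_edge (del_edge T a b) c d).
Proof.
move=> [Gsym Girr] [[Tsym Tirr] [TG [Tconn Tacyc]]] Tab Gcd ncd.
have Tdsym := del_edge_sym a b Tsym.
have cd : c != d by apply: contraTneq Gcd => ->; apply: Girr.
split; [split|split; [|split]].
- exact: add_edge_sym.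
- move=> x; rewrite /add_edge /del_edge (negbTE (Tirr x)) /=.
  by apply/uedgeP => -[] [ex ey]; move: cd; rewrite -ex -ey eqxx.
- move=> x y /orP[/andP[/TG //]|/uedgeP[] [-> ->] //]; by rewrite Gsym.
- apply: connected_add_edge Tdsym _ ncd => u; exact: connect_del_edge (Tconn a u).
- by apply: acyclic_add_edge Tdsym (acyclic_subrel _ Tacyc) ncd => x y /andP[].
Qed.

Lemma MST_edge_le G T a b c d : simple_graph G -> is_MST pt G T ->
  T a b -> G c d -> ~~ connect (del_edge T a b) c d -> vdist pt a b <= vdist pt c d.
Proof.
move=> Gsimple [Tspan Tmin] Tab Gcd ncd; set Td := del_edge T a b.
have [[Tsym Tirr] _] := Tspan.
have ab : a != b by apply: contraTneq Tab => ->; apply: Tirr.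
have cd : c != d by apply: contraTneq Gcd => ->; apply: Gsimple.2.
have [Td_ab Td_ba] : ~~ Td a b /\ ~~ Td b a by rewrite /Td /del_edge /uedge !eqxx /= ?orbT !andbF.
have [Td_cd Td_dc] : ~~ Td c d /\ ~~ Td d c.
  by rewrite [Td d c]del_edge_sym //; split; apply: contra ncd; apply: connect1.
have T_Td : T =2 add_edge Td a b.
  move=> x y; rewrite /add_edge /Td /del_edge.
  by case: (boolP (uedge a b x y)) => [/uedgeP[] [-> ->]|]; rewrite ?orbT ?andbT ?orbF // Tsym.
have := Tmin _ (spanning_tree_exchange Gsimple Tspan Tab Gcd ncd).
by rewrite -/Td (eq_weight T_Td) !weight_add_edge // lerD2l.
Qed.

Lemma MST_edge_le_spanner G T t a b p q : simple_graph G -> t_spanner pt t G ->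
  is_MST pt G T -> T a b -> ~~ connect (del_edge T a b) p q ->
  vdist pt a b <= t * vdist pt p q.
Proof.
move=> Gsimple Gspan Tmst Tab npq; set Td := del_edge T a b.
have [[[Tsym _] _] _] := Tmst.
have [s [/andP[Ps /eqP Ls] Ws]] := Gspan p q.
have [|c [d [cd_s Gcd pc npd]]] := path_crossing (P := connect Td p) Ps (connect0 _ p).
  by rewrite Ls.
apply: le_trans (le_trans (step_le_walk_len cd_s) Ws).
apply: MST_edge_le Gsimple Tmst Tab Gcd _.
by apply: contra npd; apply: connect_trans pc.
Qed.

Lemma MST_path_step_le G T t p g e : simple_graph G -> t_spanner pt t G ->
  is_MST pt G T -> path T p g -> uniq (p :: g) -> e \in zip (p :: g) g ->
  vdist pt e.1 e.2 <= t * vdist pt p (last p g).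
Proof.
move=> Gsimple Gspan Tmst Pg Ug; case: e => a b /mem_zip_cons_split[s1 [s2 [def_g ->]]].
have [[Tsimple [_ [_ Tacyc]]] _] := Tmst.
move: Pg Ug; rewrite def_g => Pg Ug.
have Tab : T (last p s1) b by move: Pg; rewrite cat_path => /and3P[].
rewrite last_cat /=; apply: MST_edge_le_spanner Gsimple Gspan Tmst Tab _.
exact: path_edge_separates Tsimple Tacyc Pg Ug.
Qed.

Lemma subtree_path_dist_le T (A : {set V}) m u s K : simple_graph T -> acyclic T ->
  subtree T A -> (#|A| <= m)%N -> path T u s -> uniq (u :: s) ->
  u \in A -> last u s \in A -> 0 <= K ->
  (forall e, e \in zip (u :: s) s -> vdist pt e.1 e.2 <= K) ->
  vdist pt u (last u s) <= (m%:R - 1) * K.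
Proof.
move=> Tsimple Tacyc Asub Am Ps Us uA endA K0 steps.
have s_lt_m : (size s < m)%N.
  apply: leq_trans Am; rewrite -ltnS -/(size (u :: s)) -(card_uniqP Us) ltnS.
  by apply: subset_leq_card; apply/subsetP; apply: tree_path_sub_subtree Ps Us uA endA.
apply: le_trans (vdist_le_walk_len u s) (le_trans (walk_len_le steps) _).
rewrite ler_wpM2r // lerBrDr natr1 ler_nat.
exact: s_lt_m.
Qed.


Lemma subtree_segment_dist_le T (A : {set V}) m p g1 s g2 K :
  simple_graph T -> acyclic T -> subtree T A -> (#|A| <= m)%N ->
  path T p (g1 ++ s ++ g2) -> uniq (p :: g1 ++ s ++ g2) ->
  last p g1 \in A -> last p (g1 ++ s) \in A -> 0 <= K ->
  (forall e, e \in zip (p :: g1 ++ s ++ g2) (g1 ++ s ++ g2) -> vdist pt e.1 e.2 <= K) ->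
  vdist pt (last p g1) (last p (g1 ++ s)) <= (m%:R - 1) * K.
Proof.
move=> Tsimple Tacyc Asub Am Pg Ug g1A; rewrite last_cat => endA K0 steps.
apply: subtree_path_dist_le Tsimple Tacyc Asub Am _ _ g1A endA K0 _.
- by move: Pg; rewrite !cat_path => /and3P[].
- by move: Ug; rewrite -cat_cons lastI cat_rcons cat_uniq -cat_cons cat_uniq => /and4P[].
- by move=> e e_s; apply: steps; rewrite !zip_cons_cat !mem_cat e_s orbT.
Qed.

End SpanningTrees.

Theorem lemma6 (R : rcfType) (D : nat) (V : finType) (pt : V -> 'rV[R]_D)
  (t : R) (G T : rel V) (m : nat) (T1 T2 : {set V}) (p q x y : V) (g : seq V) :
  injective pt ->
  1 <= t ->
  simple_graph G ->
  t_spanner pt t G ->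
  is_MST pt G T ->
  (1 <= m)%N -> (m <= #|V| - 1)%N ->
  subtree T T1 -> subtree T T2 ->
  [disjoint T1 & T2] ->
  (#|T1| <= m)%N -> (#|T2| <= m)%N ->
  p \in T1 -> q \in T2 ->
  is_walk T p q g -> uniq (p :: g) ->
  x \in T1 -> x \in p :: g ->
  y \in T2 -> y \in p :: g ->
  vdist pt x y <= (2 * t * (m%:R - 1) + 1) * vdist pt p q.
Proof.
move=> _ t1 Gsimple Gspan Tmst _ _ T1sub T2sub _ T1m T2m pT1 qT2 /andP[Pg /eqP end_g] Ug
  xT1 xg yT2 yg.
have [[Tsimple [_ [_ Tacyc]]] _] := Tmst.
set K := t * vdist pt p q.
have K0 : 0 <= K by rewrite mulr_ge0 ?edist_ge0 // (le_trans ler01).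
have steps e : e \in zip (p :: g) g -> vdist pt e.1 e.2 <= K.
  by rewrite /K -end_g; apply: MST_path_step_le Gsimple Gspan Tmst Pg Ug.
have px : vdist pt p x <= (m%:R - 1) * K.
  case/splitPl: xg Pg Ug steps xT1 => g1 g2 <- Pg Ug steps xT1.
  exact: (subtree_segment_dist_le (g1 := [::]) Tsimple Tacyc T1sub T1m Pg Ug pT1 xT1 K0).
have yq : vdist pt y q <= (m%:R - 1) * K.
  case/splitPl: yg Pg Ug steps end_g yT2 => h1 h2 <- Pg Ug steps end_g yT2.
  rewrite -end_g in qT2 *; rewrite -[h2]cats0 in Pg Ug steps.
  exact: subtree_segment_dist_le Tsimple Tacyc T2sub T2m Pg Ug yT2 qT2 K0 steps.
have xpy : vdist pt x y <= vdist pt p x + vdist pt p y.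
  by rewrite [vdist pt p x]vdistC; apply: edist_triangle.
have pqy : vdist pt p y <= vdist pt p q + vdist pt y q.
  by rewrite [vdist pt y q]vdistC; apply: edist_triangle.
have -> : (2 * t * (m%:R - 1) + 1) * vdist pt p q =
    (m%:R - 1) * K + vdist pt p q + (m%:R - 1) * K by rewrite /K; ring.
move: px yq xpy pqy; set M := (m%:R - 1) * K; lra.
Qed.
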